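(* Let $n\ge 2$ and run Protocol 1 on $n$ nodes, one of which is initially in state $L_0$ and the remaining $n-1$ in state $F$. Then Protocol 1 stably constructs the graph language $\mathscr{T}=\{G : G \text{ is a tree rooted at the leader and every node } u \text{ has } \Delta^+(u)\le 2\}$, where $\Delta^+(u)$ is the number of children of $u$; moreover, under the uniform random scheduler, the execution stabilises to a spanning tree in $\mathscr{T}$ within $O(\log n)$ parallel time with high probability.
   Context: Network constructor model: there are $n$ nodes and every pair of nodes may interact. Each node has a state from a finite set $Q$; each of the $n(n-1)/2$ node pairs carries an edge state in $\{0,1\}$ (inactive/active), all initially $0$. At each discrete step the uniform random scheduler picks an unordered pair $\{u,v\}$ uniformly at random among all $n(n-1)/2$ pairs, independently of the past, and the two nodes and their edge are updated by the transition function $\delta:(a,b,c)\mapsto(a',b',c')$ (applicable with either ordering of the pair); any triple not listed as a rule is left unchanged. All states are output states, so the output graph of a configuration is the graph on all nodes whose edges are the active edges. An execution stabilises to a graph $G$ if from some step on the output graph is always (isomorphic to) $G$; the running time is the first such step, and parallel time is the number of steps divided by $n$. A protocol stably constructs a graph language $\mathscr{G}$ if every fair execution stabilises to a graph in $\mathscr{G}$ and every graph $G\in\mathscr{G}$ is the stabilised output of some execution on $|V(G)|$ nodes (an infinite execution is fair if whenever a configuration $C$ occurs infinitely often, every configuration reachable from $C$ in one step occurs infinitely often). ''With high probability'' means with probability at least $1-n^{-a}$ for an arbitrarily chosen constant $a>0$ (the time bound's constant depending on $a$). Protocol 1 (2-Slot protocol): $Q=\{F,L_0,L_1,L_2,O_0,O_1,O_2\}$,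 rules $(L_0,F,0)\to(L_1,O_0,1)$, $(L_1,F,0)\to(L_2,O_0,1)$, $(O_0,F,0)\to(O_1,O_0,1)$, $(O_1,F,0)\to(O_2,O_0,1)$. When such a rule fires, the node that moves from $F$ to $O_0$ becomes a child of the other node; the leader (initially $L_0$) is the root. *)

From Stdlib Require Import Reals.
From HB Require Import structures.
From mathcomp Require Import all_boot.
From mathcomp Require Import boolp.

Set Implicit Arguments.
Unset Strict Implicit.
Unset Printing Implicit Defensive.

Inductive Q := F | L0 | L1 | L2 | O0 | O1 | O2.

(* Transition function; [None] = not a listed rule (triple left unchanged). *)
Definition delta (a b : Q) (c : bool) : option (Q * Q * bool) :=
  match a, b, c with
  | L0, F, false => Some (L1, O0, true)
  | L1, F, false => Some (L2, O0, true)
  | O0, F, false => Some (O1, O0, true)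
  | O1, F, false => Some (O2, O0, true)
  | _, _, _ => None
  end.

(* A configuration on the n nodes 'I_n: a state per node and an edge state per
   pair; the edge state of the unordered pair {u,v} is stored symmetrically at
   (u,v) and (v,u) (all updates are symmetric, the initial one is all 0). *)
Record config (n : nat) := Config {
  st : {ffun 'I_n -> Q};
  ed : {ffun 'I_n * 'I_n -> bool} }.

(* Unordered pairs {u,v}, u <> v, represented as (u,v) with u < v. *)
Definition upair (n : nat) := {p : 'I_n * 'I_n | p.1 < p.2}.

Definition update n (C : config n) (u v : 'I_n) (a b : Q) (c : bool) : config n :=
  Config [ffun w => if w == u then a else if w == v then b else st C w]
         [ffun p => if (p == (u, v)) || (p == (v, u)) then c else ed C p].

Definition interact n (C : config n) (u v : 'I_n) : config n :=
  match delta (st C u) (st C v) (ed C (u, v)) with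
  | Some (a, b, c) => update C u v a b c
  | None =>
      match delta (st C v) (st C u) (ed C (u, v)) with
      | Some (a, b, c) => update C v u a b c
      | None => C
      end
  end.

Definition step n (C : config n) (p : upair n) : config n :=
  interact C (val p).1 (val p).2.

Definition init n (l : 'I_n) : config n :=
  Config [ffun w => if w == l then L0 else F] [ffun _ => false].

(* Output graph: all states are output states, edges = active edges. *)
Definition out n (C : config n) : rel 'I_n := fun u v => ed C (u, v).

Definition execution n (l : 'I_n) (C : nat -> config n) : Prop :=
  C 0 = init l /\ forall t, exists p : upair n, C t.+1 = step (C t) p.

Definition inf_often n (C : nat -> config n) (c : config n) : Prop :=
  forall N, exists t, N <= t /\ C t = c.

Definition fair n (C : nat -> config n) : Prop :=
  forall c, inf_often C c -> forall p : upair n, inf_often C (step c p).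

Definition iso_rooted n (G1 : rel 'I_n) (r1 : 'I_n) (G2 : rel 'I_n) (r2 : 'I_n) :
  Prop :=
  exists f : 'I_n -> 'I_n,
    bijective f /\ f r1 = r2 /\ forall u v, G1 u v = G2 (f u) (f v).

Definition rooted_tree n (G : rel 'I_n) (r : 'I_n) (par : 'I_n -> 'I_n) : Prop :=
  par r = r /\
  (forall v, exists k, iter k par v = r) /\
  (forall u v, G u v = ((u != r) && (par u == v)) || ((v != r) && (par v == u))).

Definition children n (r : 'I_n) (par : 'I_n -> 'I_n) (u : 'I_n) : {set 'I_n} :=
  [set v | (v != r) && (par v == u)].

Definition in_T n (G : rel 'I_n) (r : 'I_n) : Prop :=
  exists par, rooted_tree G r par /\ forall u, #|children r par u| <= 2.

Definition stabilises_to n (l : 'I_n) (C : nat -> config n) (G : rel 'I_n)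
  (r : 'I_n) : Prop :=
  exists t0, forall t, t0 <= t -> iso_rooted (out (C t)) l G r.

Fixpoint run n (l : 'I_n) (sigma : nat -> upair n) (t : nat) : config n :=
  match t with
  | 0 => init l
  | t'.+1 => step (run l sigma t') (sigma t')
  end.

(* Event, depending on the first T scheduler choices s, that the running time
   is at most T and the stabilised graph is in T: whatever the later choices,
   from some step t0 <= T on the output is always (isomorphic to) a fixed G in T. *)
Definition stab_by n (l : 'I_n) (T : nat) (s : {ffun 'I_T -> upair n}) : Prop :=
  exists t0, t0 <= T /\ exists G r, in_T G r /\
    forall sigma : nat -> upair n, (forall i : 'I_T, sigma i = s i) ->
      forall t, t0 <= t -> iso_rooted (out (run l sigma t)) l G r.

Arguments stab_by {n} l T s.

(* Probability under the uniform random scheduler (first T choices i.i.d.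
   uniform over the n(n-1)/2 pairs). *)
Definition prob_stab n (l : 'I_n) (T : nat) : R :=
  Rdiv (INR #|[set s : {ffun 'I_T -> upair n} | `[< stab_by l T s >] ]|)
       (INR #|{ffun 'I_T -> upair n}|).

(* The whole analysis rests on one invariant of reachable configurations
   ([reachable_inv]): the attached (non-[F]) nodes form a tree rooted at the
   leader whose edges are exactly the active edges, every node has at most
   as many children as used slots, and free slots plus unattached nodes add
   up to [n + 1].  Every rule firing attaches one [F] node ([attach_inv]).
   - Stabilisation: the number of attached nodes is nondecreasing and
     bounded, so every execution becomes constant; by fairness no pair may
     fire there, which by the weight count forces all nodes to be attached,
     and then the invariant's tree lies in T ([fair_stabilises]).
   - Completeness: any tree of T, relabelled so that its root is the leader,
     is built by attaching its nodes one leaf at a time ([build]).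
   - Running time: with k < n attached nodes at least (n - k)(k + 1) / 2
     pairs fire, so the potential (n - k) / (k + 1) shrinks on average by a
     factor 1 - 1 / (2n) per step; averaging over all schedules and Markov's
     inequality bound the fraction of unfinished schedules by n ^ (- a) once
     T >= 2 (a + 2) n ln n ([whp_stabilisation]). *)
From Stdlib Require Import Reals Lra.
From mathcomp Require Import all_boot all_order all_algebra perm zify ring lra.
From mathcomp Require Import boolp.

Set Implicit Arguments.
Unset Strict Implicit.
Unset Printing Implicit Defensive.

Import Order.TTheory GRing.Theory Num.Theory.

Definition is_F (q : Q) : bool := if q is F then true else false.

Definition slots_used (q : Q) : nat :=
  match q with L1 | O1 => 1 | L2 | O2 => 2 | _ => 0 end.

Definition slots_free (q : Q) : nat :=
  match q with L0 | O0 => 2 | L1 | O1 => 1 | _ => 0 end.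

Definition weight (q : Q) : nat := slots_free q + is_F q.

Lemma delta_attach a b c r : delta a b c = Some r ->
  exists a', [/\ r = (a', O0, true), b = F, c = false &
    [/\ ~~ is_F a, ~~ is_F a', slots_used a' = (slots_used a).+1
      & weight a = (weight a').+1]].
Proof. by case: a; case: b; case: c => //= -[<-]; eexists; split. Qed.

Lemma delta_free a : 0 < slots_free a ->
  exists a', delta a F false = Some (a', O0, true).
Proof. by case: a => //= _; eexists. Qed.

Lemma delta_attached_target a b c : ~~ is_F b -> delta a b c = None.
Proof. by case: a; case: b; case: c. Qed.

Lemma step_all_attached n (C : config n) p :
  (forall w, ~~ is_F (st C w)) -> step C p = C.
Proof.
by move=> nF; rewrite /step /interact !delta_attached_target.
Qed.

Lemma sum_update2 n (f g : 'I_n -> nat) u v : u != v ->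
  (forall w, w != u -> w != v -> g w = f w) ->
  \sum_w g w + f u + f v = \sum_w f w + g u + g v.
Proof.
move=> uv gfE.
rewrite (bigD1 u) //= (bigD1 v) 1?eq_sym //=.
rewrite [in RHS](bigD1 u) //= [in RHS](bigD1 v) 1?eq_sym //=.
rewrite (eq_bigr f); first by lia.
by move=> w /andP[wu wv]; apply: gfE.
Qed.

Lemma parent_reaches_root n (r : 'I_n) (par : 'I_n -> 'I_n) (d : 'I_n -> nat) :
  par r = r -> (forall v, v != r -> d (par v) < d v) ->
  forall v, exists k, iter k par v = r.
Proof.
move=> par_r depth_dec.
suff reach m v : d v < m -> exists k, iter k par v = r by move=> v; exact: reach.
elim: m v => [//|m IH] v dv.
case: (eqVneq v r) => [->|vr]; first by exists 0.
have [|k Hk] := IH (par v); first by have := depth_dec v vr; lia.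
by exists k.+1; rewrite iterSr.
Qed.

Section TreeInvariant.
Variables (n : nat) (l : 'I_n).

Definition attached (C : config n) := #|[set w | ~~ is_F (st C w)]|.

Definition tree_edge (C : config n) (par : 'I_n -> 'I_n) (x y : 'I_n) :=
  (~~ is_F (st C x) && (x != l) && (par x == y)) ||
  (~~ is_F (st C y) && (y != l) && (par y == x)).

Definition children_in (C : config n) (par : 'I_n -> 'I_n) (u : 'I_n) :=
  [set x | ~~ is_F (st C x) && (x != l) && (par x == u)].

Definition tree_shape (C : config n) (par : 'I_n -> 'I_n) (d : 'I_n -> nat) :=
  [/\ par l = l, (forall v, v != l -> d (par v) < d v),
      (forall v, is_F (st C v) -> par v = l),
      (forall v, v != l -> ~~ is_F (st C v) -> ~~ is_F (st C (par v))) &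
      (forall x y, ed C (x, y) = tree_edge C par x y) /\
      (forall u, #|children_in C par u| <= slots_used (st C u))].

Definition reachable_inv (C : config n) : Prop :=
  [/\ ~~ is_F (st C l), \sum_w weight (st C w) = n.+1 &
      exists par d, tree_shape C par d].

(* The initial configuration: a star of [F] nodes hanging off the leader
   in the parent map, with no active edge. *)
Lemma init_inv : reachable_inv (init l).
Proof.
split; first by rewrite /init /= ffunE eqxx.
  rewrite /init /= (bigD1 l) //= ffunE eqxx /=.
  rewrite (eq_bigr (fun _ => 1)); last by move=> i /negbTE il; rewrite ffunE il.
  by rewrite sum1_card cardC1 card_ord; case: n l => [[]|].
exists (fun _ => l), (fun w => if w == l then 0 else 1); split => //.
- by move=> v /negbTE ->; rewrite eqxx.
- by move=> v; rewrite /init /= ffunE; case: eqP => // ->.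
split.
  move=> x y; rewrite /tree_edge /init /= !ffunE.
  by case: (eqVneq x l); case: (eqVneq y l); rewrite /= ?andbF.
move=> u; suff -> : children_in (init l) (fun _ => l) u = set0 by rewrite cards0.
by apply/setP => x; rewrite !inE /init /= ffunE; case: eqP.
Qed.

Section Attach.
Variables (C : config n) (u v : 'I_n) (a : Q).
Variables (par : 'I_n -> 'I_n) (d : 'I_n -> nat).
Hypotheses (leader_att : ~~ is_F (st C l)) (shape : tree_shape C par d).
Hypotheses (Fv : is_F (st C v)) (Fu : ~~ is_F (st C u)) (Fa : ~~ is_F a).

Let C' := update C u v a O0 true.
Let par' w := if w == v then u else par w.
Let d' w := if w == v then (d u).+1 else d w.

Lemma attach_uv : u != v.
Proof. by apply: contraNneq Fu => ->. Qed.

Lemma attach_vl : v != l.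
Proof. by apply: contraNneq leader_att => <-. Qed.

Lemma attach_st w : st C' w = if w == u then a else if w == v then O0 else st C w.
Proof. by rewrite /C' /update /= ffunE. Qed.

Lemma attach_attached w : ~~ is_F (st C' w) = ~~ is_F (st C w) || (w == v).
Proof.
rewrite attach_st; case: (eqVneq w u) => [->|wu]; first by rewrite Fu.
by case: (eqVneq w v) => [->|wv]; rewrite ?orbT ?orbF.
Qed.

Lemma attach_count : attached C' = (attached C).+1.
Proof.
rewrite /attached.
have -> : [set w | ~~ is_F (st C' w)] = v |: [set w | ~~ is_F (st C w)].
  by apply/setP => w; rewrite !inE attach_attached orbC.
by rewrite cardsU1 inE Fv.
Qed.

(* [v] goes from [F] (weight 1) to [O0] (weight 2) while [u] loses one
   unit, so the total weight is unchanged. *)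
Lemma attach_weight : weight (st C u) = (weight a).+1 ->
  \sum_w weight (st C' w) = \sum_w weight (st C w).
Proof.
move=> Wa.
have := @sum_update2 _ (fun w => weight (st C w)) (fun w => weight (st C' w))
  u v attach_uv.
rewrite !attach_st eqxx eq_sym (negbTE attach_uv) eqxx Wa /=.
have same w : w != u -> w != v -> weight (st C' w) = weight (st C w).
  by move=> wu wv; rewrite attach_st (negbTE wu) (negbTE wv).
move=> /(_ same); move: Fv; case: (st C v) => // _; rewrite /weight /=; lia.
Qed.

(* [v] is unattached, so it is nobody's parent. *)
Lemma attach_par_ne_v w : par w != v.
Proof.
case: shape => par_l _ par_F par_att _.
case: (boolP (is_F (st C w))) => [/par_F ->|nw]; first by rewrite eq_sym attach_vl.
apply/eqP => E; case: (eqVneq w l) => [wl|wl].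
  by move: attach_vl; rewrite -E wl par_l eqxx.
by have := par_att w wl nw; rewrite E Fv.
Qed.

Lemma attach_edges x y : ed C' (x, y) = tree_edge C' par' x y.
Proof.
case: shape => _ _ _ _ [edgesE _].
rewrite /C' /update /= ffunE -/C' /tree_edge !attach_attached edgesE /tree_edge.
rewrite /par' !xpair_eqE.
have pv w : (par w == v) = false by apply/negbTE/attach_par_ne_v.
have Ev : is_F (st C v) = true by [].
have uv' : (v == u) = false by rewrite eq_sym; apply/negbTE/attach_uv.
have vl' : (v == l) = false by apply/negbTE/attach_vl.
have uv := attach_uv.
case: (x =P v) => [?|/eqP xv]; case: (y =P v) => [?|/eqP yv];
case: (x =P u) => [?|/eqP xu]; case: (y =P u) => [?|/eqP yu]; subst;
rewrite ?eqxx in uv *; rewrite //= ?(eq_sym u y) ?(eq_sym u x) ?pv ?Ev ?uv' ?vl'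
  ?(negbTE uv) ?(negbTE xv) ?(negbTE yv) ?(negbTE xu) ?(negbTE yu)
  /= ?andbF ?orbF ?andbT ?orbT //.
Qed.

(* The new child lands in a slot of [u]; no other node gains a child. *)
Lemma attach_children w :
  slots_used a = (slots_used (st C u)).+1 ->
  #|children_in C' par' w| <= slots_used (st C' w).
Proof.
case: shape => _ _ _ par_att [_ ch_bound] Ua.
have sub : children_in C' par' w \subset
           (if w == u then v |: children_in C par w else children_in C par w).
  apply/subsetP => x; rewrite !inE attach_attached /par'.
  case: (x =P v) => [->|/eqP xv].
    by rewrite orbT /= => /andP[_ /eqP <-]; rewrite eqxx !inE eqxx.
  by rewrite orbF => H; case: eqP => _; rewrite ?inE H ?orbT.
have := subset_leq_card sub; rewrite attach_st.
case: (eqVneq w u) => [->|wu].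
  rewrite cardsU1 Ua => H; apply: (leq_trans H).
  by have := ch_bound u; case: (_ \notin _) => /=; lia.
case: (eqVneq w v) => [->|wv] H; last exact: leq_trans H (ch_bound w).
suff E : children_in C par v = set0 by move: H; rewrite E cards0.
apply/setP => x; rewrite !inE; apply/negP => /andP[/andP[nx xl] /eqP E].
by have := par_att x xl nx; rewrite E Fv.
Qed.

Lemma attach_shape : slots_used a = (slots_used (st C u)).+1 ->
  tree_shape C' par' d'.
Proof.
move=> Ua; case: shape => par_l depth_dec par_F par_att _.
split; last by split; [exact: attach_edges | move=> w; exact: attach_children].
- by rewrite /par' eq_sym (negbTE attach_vl).
- move=> w wl; rewrite /par' /d'; case: (eqVneq w v) => [_|wv].
    by rewrite (negbTE attach_uv).
  by rewrite (negbTE (attach_par_ne_v w)); apply: depth_dec.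
- move=> w; rewrite attach_st /par'.
  case: (eqVneq w u) => [_|wu]; first by rewrite (negbTE Fa).
  by case: (eqVneq w v) => // wv /par_F.
- move=> w wl; rewrite attach_attached /par'.
  case: (eqVneq w v) => [_ _|wv]; first by rewrite attach_attached Fu.
  by rewrite orbF => nw; rewrite attach_attached (par_att w wl nw).
Qed.

End Attach.

Lemma attach_inv C u v a : reachable_inv C -> is_F (st C v) ->
  ~~ is_F (st C u) -> ~~ is_F a ->
  slots_used a = (slots_used (st C u)).+1 -> weight (st C u) = (weight a).+1 ->
  reachable_inv (update C u v a O0 true) /\
  attached (update C u v a O0 true) = (attached C).+1.
Proof.
move=> [lC wC [par [d shape]]] Fv Fu Fa Ua Wa.
split; last exact: attach_count Fv Fu Fa.
split.
- by rewrite (attach_attached v Fu Fa) lC.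
- by rewrite (attach_weight lC Fv Fu Fa Wa).
- by exists (fun w => if w == v then u else par w),
    (fun w => if w == v then (d u).+1 else d w); exact: attach_shape.
Qed.

Lemma interact_inv C x y : reachable_inv C ->
  interact C x y = C \/
  reachable_inv (interact C x y) /\ attached (interact C x y) = (attached C).+1.
Proof.
move=> HC; rewrite /interact.
case E: (delta (st C x) (st C y) (ed C (x, y))) => [r|].
  have [a' [-> Fy _ [na na' Ua Wa]]] := delta_attach E.
  by right; apply: attach_inv => //; rewrite Fy.
case E': (delta (st C y) (st C x) (ed C (x, y))) => [r|]; last by left.
have [a' [-> Fx _ [na na' Ua Wa]]] := delta_attach E'.
by right; apply: attach_inv => //; rewrite Fx.
Qed.

Lemma step_inv C p : reachable_inv C -> reachable_inv (step C p).
Proof. by move=> HC; rewrite /step; case: (interact_inv (val p).1 (val p).2 HC) => [->|[]]. Qed.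

Lemma step_attached C p : reachable_inv C ->
  step C p = C \/ attached (step C p) = (attached C).+1.
Proof. by move=> HC; rewrite /step; case: (interact_inv (val p).1 (val p).2 HC) => [->|[]]; auto. Qed.

Definition unattached_set (C : config n) := [set w | is_F (st C w)].
Definition free_set (C : config n) := [set w | 0 < slots_free (st C w)].

Lemma card_unattached C : #|unattached_set C| + attached C = n.
Proof.
rewrite -[in RHS](card_ord n) -(cardsC (unattached_set C)).
by congr (_ + _); apply: eq_card => w; rewrite !inE.
Qed.

Lemma attached_le C : attached C <= n.
Proof. by have := card_unattached C; lia. Qed.

Lemma unattached_edges C x y : reachable_inv C -> is_F (st C x) ->
  ed C (x, y) = false /\ ed C (y, x) = false.
Proof.
move=> [_ _ [par [d [_ _ _ par_att [edgesE _]]]]] Fx.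
have not_par w : ~~ is_F (st C w) -> w != l -> par w != x.
  by move=> nw wl; apply/eqP => E; have := par_att w wl nw; rewrite E Fx.
rewrite !edgesE /tree_edge Fx /= ?andbF ?orbF.
by case: (boolP (~~ is_F (st C y))) => //= ny; case: (eqVneq y l) => //= yl;
  rewrite (negbTE (not_par y ny yl)).
Qed.

Lemma attach_on_meeting C x y : reachable_inv C -> is_F (st C x) ->
  0 < slots_free (st C y) ->
  attached (interact C x y) = (attached C).+1 /\
  attached (interact C y x) = (attached C).+1.
Proof.
move=> HC Fx fy.
have [e1 e2] := unattached_edges y HC Fx.
have [a' Ea] := delta_free fy.
have Fx' : st C x = F by move: Fx; case: (st C x).
have ny : ~~ is_F (st C y) by move: fy; case: (st C y).
have [_ [[<-] _ _ [_ na' Ua Wa]]] := delta_attach Ea.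
have [_ attached_more] := attach_inv HC Fx ny na' Ua Wa.
by rewrite /interact Fx' /= e1 e2 Ea attached_more.
Qed.

(* The free slots number [n + 1 - #unattached = attached + 1] and each node
   holds at most two, so more than half as many nodes as are attached still
   have a free slot. *)
Lemma attached_lt_free C : reachable_inv C -> attached C < 2 * #|free_set C|.
Proof.
move=> [_ wC _].
have sum_bool (b : 'I_n -> bool) : \sum_w (b w : nat) = #|[set w | b w]|.
  by rewrite -sum1dep_card [in RHS]big_mkcond; apply: eq_bigr => w _; case: (b w).
have wE : \sum_w weight (st C w) =
          \sum_w slots_free (st C w) + #|unattached_set C|.
  by rewrite /weight big_split /= sum_bool.
have free_le : \sum_w slots_free (st C w) <= 2 * #|free_set C|.
  rewrite -sum_bool big_distrr /=.
  by apply: leq_sum => w _; case: (st C w).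
by have := card_unattached C; lia.
Qed.

Definition firing (C : config n) :=
  [set p : upair n | attached (step C p) == (attached C).+1].

(* Each pair (unattached node, node with a free slot) fires; [p0] is any
   pair, used as a default value. *)
Lemma firing_count C (p0 : upair n) : reachable_inv C ->
  #|unattached_set C| * #|free_set C| <= #|firing C|.
Proof.
move=> HC.
pose ord (z : 'I_n * 'I_n) := if z.1 < z.2 then z else (z.2, z.1).
pose phi z : upair n := insubd p0 (ord z).
set D := setX (unattached_set C) (free_set C).
have distinct z : z \in D -> z.1 != z.2.
  case: z => x y; rewrite !inE /= => /andP[Fx fy]; apply/eqP => E.
  by move: Fx fy; rewrite E; case: (st C y).
have phiE z : z \in D -> val (phi z) = ord z.
  move=> /distinct zz; rewrite /phi insubdK // /ord.
  case: ifP => //= /negbT; rewrite -leqNgt leq_eqVlt.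
  by case/orP => // /eqP/val_inj E; rewrite E eqxx in zz.
rewrite -cardsX -(card_in_imset (f := phi)); last first.
  move=> [x y] [x' y'] zD zD' E.
  have := congr1 val E; rewrite (phiE _ zD) (phiE _ zD') /ord /=.
  move: zD zD'; rewrite !inE /= => /andP[Fx fy] /andP[Fx' fy'].
  have nFy w : 0 < slots_free (st C w) -> is_F (st C w) = false by case: (st C w).
  by case: ifP; case: ifP => _ _ [] E1 E2; subst => //; rewrite nFy in Fx.
apply: subset_leq_card; apply/subsetP => p /imsetP[[x y] zD ->].
have := zD; rewrite !inE /= => /andP[Fx fy].
rewrite /step (phiE _ zD) /ord /=.
have [f1 f2] := attach_on_meeting HC Fx fy.
by case: ifP => _ /=; rewrite ?f1 ?f2.
Qed.

Lemma all_attached C : attached C = n -> forall w, ~~ is_F (st C w).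
Proof.
move=> full w; have := card_unattached C; rewrite full => E.
have /cards0_eq E0 : #|unattached_set C| = 0 by lia.
by apply/negP => Fw; move/setP: E0 => /(_ w); rewrite !inE Fw.
Qed.

(* When all nodes are attached, the output graph lies in the language: the
   invariant's tree is spanning, rooted at the leader, and each node has at
   most two children since it has only two slots. *)
Lemma full_in_T C : reachable_inv C -> attached C = n -> in_T (out C) l.
Proof.
move=> [_ _ [par [d [par_l depth_dec _ _ [edgesE ch_bound]]]]] full.
have nF := all_attached full.
exists par; split; first split => //.
  split; first exact: parent_reaches_root par_l depth_dec.
  by move=> u v; rewrite /out edgesE /tree_edge !nF.
move=> u; have -> : #|children l par u| = #|children_in C par u|.
  by apply: eq_card => x; rewrite !inE nF.
by apply: (leq_trans (ch_bound u)); case: (st C u).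
Qed.

(* A configuration on which every interaction is void has all nodes
   attached: otherwise an unattached node and a node with a free slot
   (which exists by [attached_lt_free]) would interact. *)
Lemma stuck_full C (p0 : upair n) : reachable_inv C ->
  (forall p, step C p = C) -> attached C = n.
Proof.
move=> HC stuck.
have no_firing : #|firing C| = 0.
  by apply/eqP; rewrite cards_eq0; apply/eqP/setP => p; rewrite !inE stuck; lia.
have := firing_count p0 HC; have := attached_lt_free HC.
have := card_unattached C; rewrite no_firing; nia.
Qed.

End TreeInvariant.

Definition pair01 n (n2 : 1 < n) : upair n :=
  exist (fun p : 'I_n * 'I_n => p.1 < p.2)
    (Ordinal (ltnW n2), Ordinal n2) isT.

Lemma nondecreasing_bounded_stable (f : nat -> nat) (B : nat) :
  (forall t, f t <= f t.+1) -> (forall t, f t <= B) ->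
  exists t0, forall t, t0 <= t -> f t = f t0.
Proof.
move=> f_step f_bound.
have f_mono : {homo f : s t / s <= t} := homo_leq leqnn leq_trans f_step.
have value_ex : exists k, `[< exists t, f t = k >] by exists (f 0); apply/asboolP; exists 0.
have value_bound k : `[< exists t, f t = k >] -> k <= B.
  by move=> /asboolP[t <-].
case: (ex_maxnP value_ex value_bound) => k /asboolP[t0 ft0] kmax.
exists t0 => t t0t; apply/eqP; rewrite eqn_leq (f_mono _ _ t0t) andbT ft0.
by apply: kmax; apply/asboolP; exists t.
Qed.

Section FairExecutions.
Variables (n : nat) (l : 'I_n) (C : nat -> config n).
Hypothesis exec : execution l C.

Lemma execution_inv t : reachable_inv l (C t).
Proof.
case: exec => C0 next; elim: t => [|t IH]; first by rewrite C0; exact: init_inv.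
by have [p ->] := next t; exact: step_inv.
Qed.

(* Attaching is irreversible and bounded by [n], so every execution reaches
   a configuration it never leaves. *)
Lemma execution_eventually_constant :
  exists t0, forall t, t0 <= t -> C t = C t0.
Proof.
case: exec => _ next.
have attached_step t : attached (C t) <= attached (C t.+1).
  by have [p ->] := next t; case: (step_attached p (execution_inv t)) => ->.
have [t0 stable] := nondecreasing_bounded_stable attached_step
  (fun t => attached_le (C t)).
exists t0; elim=> [|t IH]; first by rewrite leqn0 => /eqP <-.
rewrite leq_eqVlt => /orP[/eqP <- //|]; rewrite ltnS => t0t.
have [p E] := next t.
case: (step_attached p (execution_inv t)) => E'; first by rewrite E E' IH.
by have := stable t.+1 (leqW t0t); have := stable t t0t; rewrite /= E E'; lia.
Qed.

(* Under fairness, the final configuration has every node attached, so the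
   execution stabilises to a graph of the language. *)
Lemma fair_stabilises : 1 < n -> fair C ->
  exists (G : rel 'I_n) (r : 'I_n), in_T G r /\ stabilises_to l C G r.
Proof.
move=> n2 fairC.
have [t0 const] := execution_eventually_constant.
have fixed p : step (C t0) p = C t0.
  have often : inf_often C (C t0).
    by move=> N; exists (maxn N t0); rewrite leq_maxl const // leq_maxr.
  by have [t [t0t <-]] := fairC _ often p t0; apply: const.
have full := stuck_full (pair01 n2) (execution_inv t0) fixed.
exists (out (C t0)), l; split; first exact: full_in_T (execution_inv t0) full.
by exists t0 => t t0t; rewrite const //; exists id; split; [exists id | split].
Qed.

End FairExecutions.

Lemma run_foldl n (l : 'I_n) (sigma : nat -> upair n) t :
  run l sigma t = foldl (@step n) (init l) [seq sigma i | i <- iota 0 t].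
Proof.
elim: t => [//|t IH].
by rewrite -addn1 iotaD map_cat foldl_cat -IH /= addn1.
Qed.

Definition slot_state (leader : bool) (k : nat) : Q :=
  if leader then (match k with 0 => L0 | 1 => L1 | _ => L2 end)
  else (match k with 0 => O0 | 1 => O1 | _ => O2 end).

Lemma slot_state_delta b k : k < 2 ->
  delta (slot_state b k) F false = Some (slot_state b k.+1, O0, true).
Proof. by case: b; case: k => [|[|]]. Qed.

Lemma slot_state_attached b k : ~~ is_F (slot_state b k).
Proof. by case: b; case: k => [|[|]]. Qed.

Lemma step_realises n (C : config n) u v a : u != v ->
  ed C (u, v) = ed C (v, u) -> is_F (st C v) ->
  delta (st C u) (st C v) (ed C (u, v)) = Some (a, O0, true) ->
  exists p : upair n, step C p = update C u v a O0 true.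
Proof.
move=> uv symC Fv rule.
case: (ltngtP u v) => [uv'|vu|/val_inj E]; last by rewrite E eqxx in uv.
  by exists (exist _ (u, v) uv'); rewrite /step /interact /= rule.
exists (exist _ (v, u) vu); rewrite /step /interact /= -symC rule.
by have -> : st C v = F by move: Fv; case: (st C v).
Qed.

(* When parent steps always reach the root, the least number of steps to
   the root is a depth function decreasing along parents. *)
Lemma depth_of_reach n (r : 'I_n) (par : 'I_n -> 'I_n) :
  (forall v, exists k, iter k par v = r) ->
  exists d : 'I_n -> nat, forall v, v != r -> d (par v) < d v.
Proof.
move=> reach.
have reach' v : exists k, iter k par v == r.
  by have [k Hk] := reach v; exists k; rewrite Hk.
exists (fun v => ex_minn (reach' v)) => v vr.
case: (ex_minnP (reach' v)) => m Hm m_min.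
case: (ex_minnP (reach' (par v))) => m' _ m'_min.
case: m Hm m_min => [/= /eqP E _|m Hm _]; first by rewrite E eqxx in vr.
by apply: m'_min; rewrite -iterSr.
Qed.

(* Every tree rooted at the leader with at most two children per node is
   built by some schedule: add its nodes deepest-last, one leaf at a time. *)
Section Construction.
Variables (n : nat) (l : 'I_n) (par : 'I_n -> 'I_n) (d : 'I_n -> nat).
Hypotheses (par_l : par l = l) (depth_dec : forall v, v != l -> d (par v) < d v).
Hypothesis ch_bound : forall u, #|children l par u| <= 2.

Definition nchildren (S : {set 'I_n}) w := #|[set x in S | (x != l) && (par x == w)]|.

Definition built_state (S : {set 'I_n}) w :=
  if w \in S then slot_state (w == l) (nchildren S w) else F.

Definition built_edge (S : {set 'I_n}) x y :=
  ((x \in S) && (x != l) && (par x == y)) || ((y \in S) && (y != l) && (par y == x)).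

Definition realises (S : {set 'I_n}) (C : config n) :=
  (forall w, st C w = built_state S w) /\ (forall x y, ed C (x, y) = built_edge S x y).

Lemma realises_init : realises [set l] (init l).
Proof.
have no_child w : nchildren [set l] w = 0.
  apply/eqP; rewrite cards_eq0; apply/eqP/setP => x; rewrite !inE.
  by case: (eqVneq x l).
split => [w|x y]; rewrite /init /= ffunE.
  by rewrite /built_state inE no_child; case: (eqVneq w l).
by rewrite /built_edge !inE; case: (eqVneq x l); case: (eqVneq y l).
Qed.

Section AddLeaf.
Variables (S : {set 'I_n}) (v : 'I_n) (C : config n).
Hypotheses (vS : v \in S) (vl : v != l) (parvS : par v \in S).
Hypothesis leaf : forall x, x \in S -> x != l -> par x != v.
Hypothesis rep : realises (S :\ v) C.

Lemma leaf_par_neq : par v != v.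
Proof. by apply/eqP => E; have := depth_dec vl; rewrite E ltnn. Qed.

Lemma leaf_no_child x : x \in S -> (x != l) && (par x == v) = false.
Proof. by move=> xS; case: (eqVneq x l) => //= xl; exact/negbTE/leaf. Qed.

Lemma nchildren_leaf w : nchildren S w =
  if w == par v then (nchildren (S :\ v) w).+1 else nchildren (S :\ v) w.
Proof.
rewrite /nchildren; case: (eqVneq w (par v)) => [->|wp].
  have -> : [set x in S | (x != l) && (par x == par v)] =
            v |: [set x in S :\ v | (x != l) && (par x == par v)].
    apply/setP => x; rewrite !inE.
    by case: (x =P v) => [->|_] /=; rewrite ?vS ?vl ?eqxx.
  by rewrite cardsU1 !inE eqxx.
apply: eq_card => x; rewrite !inE; case: (x =P v) => [->|_] //=.
by rewrite vS (negbTE vl) /= eq_sym (negbTE wp).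
Qed.

Lemma leaf_rule : delta (st C (par v)) (st C v) (ed C (par v, v)) =
  Some (slot_state (par v == l) (nchildren S (par v)), O0, true).
Proof.
have [st_rep ed_rep] := rep.
have pvS : par v \in S :\ v by rewrite in_setD1 leaf_par_neq.
have free : nchildren (S :\ v) (par v) < 2.
  have : nchildren S (par v) <= 2.
    apply: leq_trans (ch_bound (par v)); apply: subset_leq_card.
    by apply/subsetP => x; rewrite !inE => /andP[_ ->].
  by rewrite nchildren_leaf eqxx.
rewrite !st_rep ed_rep /built_edge /built_state pvS !inE eqxx /= orbF.
rewrite (leaf_no_child parvS) nchildren_leaf eqxx.
exact: slot_state_delta.
Qed.

Let C' := update C (par v) v
  (slot_state (par v == l) (nchildren S (par v))) O0 true.

Lemma add_leaf_states w : st C' w = built_state S w.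
Proof.
have [st_rep _] := rep.
rewrite /C' /update /= ffunE /built_state.
case: (w =P par v) => [->|/eqP wp]; first by rewrite parvS.
case: (w =P v) => [->|/eqP wv].
  rewrite vS (negbTE vl) (_ : nchildren S v = 0) //.
  apply/eqP; rewrite cards_eq0; apply/eqP/setP => x; rewrite !inE.
  by case: (boolP (x \in S)) => //= xS; rewrite leaf_no_child.
rewrite st_rep /built_state in_setD1 wv /= nchildren_leaf (negbTE wp).
by case: (w \in S).
Qed.

Lemma add_leaf_edges x y : ed C' (x, y) = built_edge S x y.
Proof.
have [_ ed_rep] := rep.
rewrite /C' /update /= ffunE ed_rep /built_edge !in_setD1 !xpair_eqE.
have no_child z : (z \in S) && (z != l) && (par z == v) = false.
  by case: (boolP (z \in S)) => //= zS; rewrite leaf_no_child.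
have pv := leaf_par_neq.
have vl' : (v == l) = false by apply/negbTE.
case: (x =P v) => [->|/eqP xv]; case: (y =P v) => [->|/eqP yv];
  rewrite ?eqxx ?vS ?vl' ?no_child /= ?andbF ?orbF ?andbT ?orbT //=.
all: rewrite ?(negbTE xv) ?(negbTE yv) ?(eq_sym v) ?(negbTE pv) /= ?andbF ?orbF //.
all: by rewrite (eq_sym (par v)); case: (_ == _).
Qed.

Lemma add_leaf : exists p, realises S (step C p).
Proof.
have [st_rep ed_rep] := rep.
have Fv : is_F (st C v) by rewrite st_rep /built_state in_setD1 eqxx.
have symC : ed C (par v, v) = ed C (v, par v) by rewrite !ed_rep /built_edge orbC.
have [p Ep] := step_realises leaf_par_neq symC Fv leaf_rule.
by exists p; rewrite Ep; split; [exact: add_leaf_states | exact: add_leaf_edges].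
Qed.

End AddLeaf.

Lemma deepest_leaf (S : {set 'I_n}) v : v \in S :\ l ->
  (forall x, x \in S :\ l -> d x <= d v) ->
  forall x, x \in S -> x != l -> par x != v.
Proof.
move=> _ vmax x xS xl; apply/eqP => E.
have := vmax x; rewrite in_setD1 xl xS => /(_ isT).
by have := depth_dec xl; rewrite E; lia.
Qed.

Lemma build (S : {set 'I_n}) : l \in S -> (forall x, x \in S -> par x \in S) ->
  exists ps : seq (upair n), realises S (foldl (@step n) (init l) ps).
Proof.
elim: {S}#|S| {-2}S (erefl #|S|) => [|m IH] S cardS lS closed.
  by move: lS; rewrite (cards0_eq cardS) inE.
case: (set_0Vmem (S :\ l)) => [E|[v0 v0S]].
  have -> : S = [set l].
    by apply/setP => x; move/setP: E => /(_ x); rewrite !inE; case: eqP => // ->.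
  by exists [::]; exact: realises_init.
case: (arg_maxnP d v0S) => v vS' vmax; have [vl vS] := setD1P vS'.
have leaf := deepest_leaf vS' vmax.
have cardS' : #|S :\ v| = m by move: cardS; rewrite (cardsD1 v S) vS => -[].
have lS' : l \in S :\ v by rewrite in_setD1 lS eq_sym vl.
have closed' x : x \in S :\ v -> par x \in S :\ v.
  rewrite !in_setD1 => /andP[xv xS]; rewrite closed // andbT.
  by case: (eqVneq x l) => [->|xl]; [rewrite par_l eq_sym | exact: leaf].
have [ps rep] := IH _ cardS' lS' closed'.
have [p Hp] := add_leaf vS vl (closed v vS) leaf rep.
by exists (rcons ps p); rewrite foldl_rcons.
Qed.

End Construction.

(* A member of the language rooted at [r], relabelled by the transposition
   of [l] and [r], is a tree rooted at the leader with a depth function. *)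
Lemma relabel_to_leader n (l : 'I_n) (G : rel 'I_n) (r : 'I_n) : in_T G r ->
  exists (f : 'I_n -> 'I_n) (par : 'I_n -> 'I_n) (d : 'I_n -> nat),
  [/\ bijective f, f l = r, par l = l,
      forall v, v != l -> d (par v) < d v &
      forall u, #|children l par u| <= 2] /\
  forall u v, G (f u) (f v) = ((u != l) && (par u == v)) || ((v != l) && (par v == u)).
Proof.
move=> [par [[par_r [reach edgesG]] ch_bound]].
pose f := tperm l r.
have fK : involutive f := tpermK l r.
have f_eq a b : (f a == b) = (a == f b) by rewrite -{1}(fK b) (inj_eq (inv_inj fK)).
pose par' w := f (par (f w)).
have iterE k v : iter k par' v = f (iter k par (f v)).
  by elim: k => [|k IH] /=; [rewrite fK | rewrite IH /par' fK].
have [d depth_dec] : exists d : 'I_n -> nat, forall v, v != l -> d (par' v) < d v.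
  apply: depth_of_reach => v; have [k Hk] := reach (f v).
  by exists k; rewrite iterE Hk tpermR.
exists f, par', d; split; [split|].
- by exists f.
- exact: tpermL.
- by rewrite /par' tpermL par_r tpermR.
- exact: depth_dec.
- move=> u; have -> : children l par' u = f @^-1: children r par (f u).
    by apply/setP => v; rewrite !inE /par' !f_eq tpermR.
  by rewrite card_preimset ?ch_bound //; exact: inv_inj.
- by move=> u v; rewrite edgesG /par' !f_eq tpermR.
Qed.

Lemma scheduled_execution n (l : 'I_n) (p0 : upair n) (ps : seq (upair n)) :
  (forall w, ~~ is_F (st (foldl (@step n) (init l) ps) w)) ->
  exists C, [/\ execution l C, fair C &
    forall t, size ps <= t -> C t = foldl (@step n) (init l) ps].
Proof.
set Cf := foldl _ _ ps => all_att.
pose sigma i := nth p0 ps i.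
have runE t : size ps <= t -> run l sigma t = Cf.
  move=> /subnKC <-; elim: (t - size ps) => [|j IH].
    by rewrite addn0 run_foldl /Cf -{2}(mkseq_nth p0 ps).
  by rewrite addnS /= IH step_all_attached.
exists (run l sigma); split => //; first by split => // t; exists (sigma t).
move=> c often p N; have [t [t_late <-]] := often (size ps).
exists (maxn N (size ps)); rewrite leq_maxl runE ?leq_maxr //.
by rewrite runE // step_all_attached.
Qed.

Lemma language_realised n (l : 'I_n) : 1 < n ->
  forall (G : rel 'I_n) (r : 'I_n), in_T G r ->
  exists C : nat -> config n, execution l C /\ fair C /\ stabilises_to l C G r.
Proof.
move=> n2 G r inT.
have [f [par [d [[f_bij fl par_l depth_dec ch_bound] edgesG]]]] := relabel_to_leader l inT.
have [ps [st_rep ed_rep]] := build par_l depth_dec ch_bound (in_setT l)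
  (fun x _ => in_setT (par x)).
have all_att w : ~~ is_F (st (foldl (@step n) (init l) ps) w).
  by rewrite st_rep /built_state in_setT slot_state_attached.
have [C [execC fairC constC]] := scheduled_execution (pair01 n2) all_att.
exists C; split=> //; split=> //; exists (size ps) => t t_late.
rewrite constC //; exists f; split=> //; split=> // u v.
by rewrite /out ed_rep /built_edge !in_setT edgesG.
Qed.

(* For the running time we follow the potential [(n - k) / (k + 1)] of
   the number [k] of attached nodes along uniformly random schedules.  With
   [k < n] attached nodes, at least [(n - k) (k + 1) / 2] of the [N] pairs
   fire, so one step multiplies the average potential by [1 - 1 / (2 n)]. *)
Section Potential.
Variables (n : nat) (l : 'I_n).
Local Open Scope ring_scope.

Definition potential (k : nat) : rat := (n - k)%:R / (k.+1)%:R.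

Lemma potential_ge0 k : 0 <= potential k.
Proof. by rewrite /potential divr_ge0 ?ler0n. Qed.

(* With [k] attached nodes, at least [(n - k) (k + 1) / 2] pairs fire:
   combine [firing_count] with [attached_lt_free]. *)
Lemma firing_lower_bound (C : config n) (p0 : upair n) : reachable_inv l C ->
  ((n - attached C) * (attached C).+1 <= 2 * #|firing C|)%N.
Proof.
move=> HC; have := firing_count p0 HC; have := attached_lt_free HC.
have := card_unattached C; set k := attached C => cardF k_lt fire_ge.
have -> : (n - k = #|unattached_set C|)%N by lia.
by have := leq_mul (leqnn #|unattached_set C|) k_lt; nia.
Qed.

Lemma drift_arith (k m N : nat) : (k < n)%N -> ((n - k) * k.+1 <= 2 * m)%N ->
  (2 * N <= n * n)%N -> (N * (n - k) * k.+2 <= 2 * n * m * n.+1)%N.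
Proof.
move=> kn fire_ge N_le.
set a := (n - k)%N in fire_ge *.
have pairs_le : (2 * N * a * k.+2 <= n * n * a * k.+2)%N.
  by rewrite !leq_mul2r N_le !orbT.
have depth_le : (n * k.+2 <= 2 * n.+1 * k.+1)%N by nia.
have := leq_mul (leqnn (n * a)) depth_le.
have := leq_mul (leqnn (2 * n * n.+1)) fire_ge.
nia.
Qed.

Lemma sum_indicator (T : finType) (A : {set T}) :
  \sum_(p : T) ((p \in A)%:R : rat) = #|A|%:R.
Proof.
rewrite (eq_bigr (fun p => if p \in A then 1 else 0)); last by move=> p _; case: (p \in A).
by rewrite -big_mkcond /= sumr_const.
Qed.

Lemma drift (C : config n) (p0 : upair n) : reachable_inv l C ->
  (2 * #|{: upair n}| <= n * n)%N ->
  \sum_(p : upair n) potential (attached (step C p)) <=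
  #|{: upair n}|%:R * (1 - (2 * n)%:R^-1) * potential (attached C).
Proof.
move=> HC N_le.
set k := attached C; set N := #|{: upair n}|; set m := #|firing C|.
have stepE p : potential (attached (step C p)) =
    potential k - (p \in firing C)%:R * (potential k - potential k.+1).
  rewrite inE; case: (step_attached p HC) => ->; rewrite -/k.
    by rewrite (_ : (k == k.+1) = false) ?mul0r ?subr0 //; lia.
  by rewrite eqxx mul1r opprB addrC subrK.
rewrite (eq_bigr _ (fun p _ => stepE p)) sumrB sumr_const -big_distrl /=.
rewrite sum_indicator -/m -[potential k *+ _]mulr_natl (_ : #|xpredT| = N) //.
have [kn|nk] := ltnP k n; last first.
  have V0 j : (n <= j)%N -> potential j = 0.
    by move=> nj; rewrite /potential (_ : (n - j = 0)%N) ?mul0r //; lia.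
  by rewrite !V0 ?subr0 ?mulr0 ?sub0r ?oppr0 ?mul0rn // ltnW.
have arith := drift_arith kn (firing_lower_bound p0 HC) N_le.
rewrite -(ler_nat rat) !natrM in arith.
have e1 : ((n - k)%:R : rat) = n%:R - k%:R by rewrite natrB // ltnW.
have e2 : ((n - k.+1)%:R : rat) = n%:R - k%:R - 1.
  by rewrite natrB // -addn1 natrD opprD addrA.
have e3 : ((k.+1)%:R : rat) = k%:R + 1 by rewrite -addn1 natrD.
have e4 : ((k.+2)%:R : rat) = k%:R + 2 by rewrite -addn2 natrD.
have e5 : ((n.+1)%:R : rat) = n%:R + 1 by rewrite -addn1 natrD.
rewrite e1 e4 e5 in arith.
have n_pos : (0 : rat) < n%:R by rewrite ltr0n; lia.
have k_ge0 : (0 : rat) <= k%:R by rewrite ler0n.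
rewrite /potential e1 e2 e3 e4 natrM.
set Nn := (n%:R : rat) in arith n_pos *; set K := (k%:R : rat) in arith k_ge0 *.
set M := (m%:R : rat) in arith *; set NN := (N%:R : rat) in arith *.
rewrite -subr_ge0.
have -> : NN * (1 - (2 * Nn)^-1) * ((Nn - K) / (K + 1)) -
    (NN * ((Nn - K) / (K + 1)) - M * ((Nn - K) / (K + 1) - (Nn - K - 1) / (K + 2))) =
    (2 * Nn * M * (Nn + 1) - NN * (Nn - K) * (K + 2)) / (2 * Nn * (K + 1) * (K + 2)).
  by field; apply/and3P; split; rewrite lt0r_neq0 //; lra.
apply: divr_ge0; first by rewrite subr_ge0.
by rewrite !mulr_ge0 //; lra.
Qed.

End Potential.

Section ScheduleAverage.
Local Open Scope ring_scope.
Variables (U : finType) (X : Type) (f : X -> U -> X) (P : X -> Prop).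
Variables (W : X -> rat) (th : rat).
Hypotheses (P_step : forall x u, P x -> P (f x u)) (th_ge0 : 0 <= th).
Hypothesis contract : forall x, P x -> \sum_u W (f x u) <= th * W x.

Lemma sum_schedules_contract T x : P x ->
  \sum_(s : {ffun 'I_T -> U}) W (foldl f x [seq s i | i <- enum 'I_T])
  <= th ^+ T * W x.
Proof.
elim: T x => [|T IH] x Px.
  rewrite enum_ord0 /= sumr_const card_ffun card_ord expn0 expr0 mul1r.
  by rewrite mulr1n.
pose cons_sch (z : U * {ffun 'I_T -> U}) : {ffun 'I_T.+1 -> U} :=
  [ffun i => if unlift ord0 i is Some j then z.2 j else z.1].
pose uncons (s : {ffun 'I_T.+1 -> U}) := (s ord0, [ffun j => s (lift ord0 j)]).
have consK : cancel uncons cons_sch.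
  move=> s; apply/ffunP => i; rewrite /cons_sch /uncons ffunE.
  by case: unliftP => [j ->|->] /=; rewrite ?ffunE.
have unconsK : cancel cons_sch uncons.
  move=> [p s]; rewrite /cons_sch /uncons /= ffunE unlift_none; congr (_, _).
  by apply/ffunP => j; rewrite !ffunE liftK.
rewrite (reindex cons_sch); last by exists uncons.
rewrite -(pair_bigA _ (fun p s =>
  W (foldl f x [seq cons_sch (p, s) i | i <- enum 'I_T.+1]))) /=.
apply: (le_trans (y := \sum_p th ^+ T * W (f x p))).
  apply: ler_sum => p _.
  rewrite (eq_bigr (fun s : {ffun 'I_T -> U} =>
    W (foldl f (f x p) [seq s i | i <- enum 'I_T]))); first exact: IH (P_step p Px).
  move=> s _; rewrite enum_ordSl /= ffunE unlift_none /= -map_comp.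
  by congr (W (foldl _ _ _)); apply: eq_map => j; rewrite /= ffunE liftK.
by rewrite -mulr_sumr exprSr -mulrA ler_wpM2l ?exprn_ge0 // contract.
Qed.

End ScheduleAverage.

Section BadSchedules.
Variables (n : nat) (l : 'I_n).

Lemma card_upair : (2 * #|{: upair n}| <= n * n)%N.
Proof.
rewrite card_sig.
set A := [set p : 'I_n * 'I_n | p.1 < p.2].
have -> : #|[pred p : 'I_n * 'I_n | p.1 < p.2]| = #|A| by apply: eq_card => p; rewrite !inE.
pose swap (p : 'I_n * 'I_n) := (p.2, p.1).
have swapK : involutive swap by case.
have card_swap : #|swap @^-1: A| = #|A| by apply: card_preimset; apply: inv_inj.
have disj : A :&: swap @^-1: A = set0.
  by apply/setP => -[x y]; rewrite !inE /=; apply/negP => /andP[]; lia.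
have := cardsU A (swap @^-1: A); rewrite disj cards0 subn0 card_swap => E.
have := subset_leq_card (subsetT (A :|: swap @^-1: A)).
by rewrite cardsT card_prod card_ord; lia.
Qed.

Definition final_config T (s : {ffun 'I_T -> upair n}) :=
  foldl (@step n) (init l) [seq s i | i <- enum 'I_T].

Lemma run_final T (s : {ffun 'I_T -> upair n}) (sigma : nat -> upair n) :
  (forall i : 'I_T, sigma i = s i) -> run l sigma T = final_config s.
Proof.
move=> agree; rewrite run_foldl /final_config -val_enum_ord -map_comp.
by congr foldl; apply: eq_map => i /=.
Qed.

Lemma final_inv T (s : {ffun 'I_T -> upair n}) : reachable_inv l (final_config s).
Proof.
rewrite /final_config; elim: [seq s i | i <- _] (init l) (init_inv l) => //= p ps IH C HC.
exact/IH/step_inv.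
Qed.

Lemma stab_of_full T (s : {ffun 'I_T -> upair n}) :
  attached (final_config s) = n -> stab_by l T s.
Proof.
move=> full; exists T; split => //; exists (out (final_config s)), l; split.
  exact: full_in_T (final_inv s) full.
move=> sigma agree t Tt.
suff -> : run l sigma t = final_config s by exists id; split; [exists id | split].
elim: t Tt => [|t IH]; first by rewrite leqn0 => /eqP <-; apply: run_final.
rewrite leq_eqVlt => /orP[/eqP <-|]; first exact: run_final.
by rewrite ltnS => /IH /= ->; apply/step_all_attached/all_attached.
Qed.

Local Open Scope ring_scope.

(* By Markov's inequality on the potential, which is at least [1 / n] while
   some node is unattached. *)
Lemma bad_schedules_rat (p0 : upair n) T :
  #|[set s : {ffun 'I_T -> upair n} | (attached (final_config s) < n)%N]|%:R
    * (n%:R)^-1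
  <= (#|{: upair n}|%:R * (1 - (2 * n)%:R^-1)) ^+ T * potential n 1.
Proof.
have n_pos : (0 < n)%N by case: n l => [[]|].
have th_ge0 : 0 <= #|{: upair n}|%:R * (1 - (2 * n)%:R^-1) :> rat.
  by rewrite mulr_ge0 // subr_ge0 invf_le1 // ?ler1n ?ltr0n; lia.
have := @sum_schedules_contract _ _ (@step n) (reachable_inv l)
  (fun C => potential n (attached C)) _ (fun x u Hx => step_inv u Hx) th_ge0
  (fun x Hx => drift p0 Hx card_upair) T (init l) (init_inv l).
have -> : attached (init l) = 1%N.
  rewrite /attached (_ : [set w | _] = [set l]) ?cards1 //.
  by apply/setP => w; rewrite !inE /init /= ffunE; case: eqP.
apply: le_trans.
rewrite -sum_indicator big_distrl /=; apply: ler_sum => s _.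
rewrite inE -/(final_config s); case: ltnP => /= H; last by rewrite mul0r potential_ge0.
rewrite mul1r /potential; set k := attached (final_config s).
have k_pos : (0 : rat) < k.+1%:R by rewrite ltr0n.
apply: (@le_trans _ _ (k.+1%:R^-1)); first by rewrite lef_pV2 ?posrE ?ltr0n // ler_nat.
by rewrite ler_pdivlMr // mulVf ?ler1n ?subn_gt0 // lt0r_neq0.
Qed.

Lemma bad_schedules_nat (p0 : upair n) T :
  (#|[set s : {ffun 'I_T -> upair n} | (attached (final_config s) < n)%N]|
     * 2 * (2 * n) ^ T
   <= n * (n - 1) * (#|{: upair n}| * (2 * n - 1)) ^ T)%N.
Proof.
have n_pos : (0 < n)%N by case: n l => [[]|].
have := bad_schedules_rat p0 T.
set A := #|_|; set N := #|{: upair n}|.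
have n_pos' : (0 : rat) < n%:R by rewrite ltr0n.
rewrite /potential ler_pdivrMr // => markov.
rewrite -(ler_nat rat) !natrM !natrX !natrM natrB // natrB ?muln_gt0 // natrM.
apply: (le_trans (ler_wpM2r _ (ler_wpM2r _ markov))); rewrite ?exprn_ge0 ?mulr_ge0 ?ler0n //.
rewrite natrB // natrM.
rewrite (_ : N%:R * (1 - (2 * n%:R)^-1) = N%:R * (2%:R * n%:R - 1) / (2%:R * n%:R) :> rat);
  last by field; rewrite lt0r_neq0.
rewrite expr_div_n le_eqVlt; apply/orP; left; apply/eqP; field.
by rewrite expf_neq0 // mulf_neq0 // lt0r_neq0.
Qed.

End BadSchedules.

Lemma good_or_bad n (l : 'I_n) T :
  (#|{ffun 'I_T -> upair n}| <=
   #|[set s : {ffun 'I_T -> upair n} | `[< stab_by l T s >] ]| +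
   #|[set s : {ffun 'I_T -> upair n} | attached (final_config l s) < n]|)%N.
Proof.
rewrite -(cardsC [set s | `[< stab_by l T s >] ]) leq_add2l subset_leq_card //.
apply/subsetP => s; rewrite !inE => /asboolPn not_good.
have := attached_le (final_config l s); rewrite leq_eqVlt => /orP[/eqP full|//].
by case: not_good; exact: stab_of_full.
Qed.

Section RealBounds.
Local Open Scope R_scope.

Lemma exp_monotone (x y : R) : x <= y -> exp x <= exp y.
Proof. by case/Rle_lt_or_eq_dec => [/exp_increasing/Rlt_le|->] //; exact: Rle_refl. Qed.

Lemma exp_pow (y : R) (T : nat) : exp y ^ T = exp (INR T * y).
Proof.
elim: T => [|T IH]; first by rewrite /= Rmult_0_l exp_0.
by rewrite S_INR /= IH -exp_plus; f_equal; Lra.lra.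
Qed.

Lemma contraction_pow_le (x : R) (T : nat) : 2 <= x ->
  (1 - / (2 * x)) ^ T <= exp (INR T * (- / (2 * x))).
Proof.
move=> x_ge2; rewrite -exp_pow; apply: pow_incr; split; last exact: exp_ineq1_le.
have : / (2 * x) <= / 2 by apply: Rinv_le_contravar; Lra.lra.
by Lra.lra.
Qed.

Lemma exp_time_le (x a : R) (T : nat) : 2 <= x -> 0 < a ->
  2 * (a + 2) * x * ln x <= INR T ->
  exp (INR T * (- / (2 * x))) <= Rpower x (- (a + 2)).
Proof.
move=> x_ge2 a_pos T_ge; rewrite /Rpower; apply: exp_monotone.
have ln_pos : 0 < ln x by rewrite -ln_1; apply: ln_increasing; Lra.lra.
suff : (a + 2) * ln x <= INR T * / (2 * x) by Lra.lra.
apply: (Rmult_le_reg_r (2 * x)); first by Lra.lra.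
rewrite [X in _ <= X]Rmult_assoc Rinv_l ?Rmult_1_r; last by Lra.lra.
by Lra.nra.
Qed.

Lemma bad_fraction_le (x a N A : R) (T : nat) :
  2 <= x -> 0 < a -> 0 <= A -> 0 <= N ->
  A * 2 * (2 * x) ^ T <= x * (x - 1) * (N * (2 * x - 1)) ^ T ->
  2 * (a + 2) * x * ln x <= INR T ->
  A <= Rpower x (- a) * N ^ T.
Proof.
move=> x_ge2 a_pos A_ge0 N_ge0 bound T_ge.
set q := 1 - / (2 * x).
have pow2x_pos : 0 < (2 * x) ^ T by apply: pow_lt; Lra.lra.
have NT_ge0 : 0 <= N ^ T by apply: pow_le.
have qT_le : q ^ T <= Rpower x (- (a + 2)) :=
  Rle_trans _ _ _ (contraction_pow_le T x_ge2) (exp_time_le x_ge2 a_pos T_ge).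
have A_le : A <= x * x * N ^ T * q ^ T.
  rewrite (_ : 2 * x - 1 = 2 * x * q) in bound; last first.
    by rewrite /q Rmult_minus_distr_l Rmult_1_r Rinv_r; Lra.lra.
  rewrite !Rpow_mult_distr in bound.
  have qT_ge0 : 0 <= q ^ T.
    apply: pow_le; have : / (2 * x) <= / 2 by apply: Rinv_le_contravar; Lra.lra.
    by rewrite /q; Lra.lra.
  have : A * 2 <= x * (x - 1) * (N ^ T * q ^ T).
    apply: (Rmult_le_reg_r ((2 * x) ^ T)) => //.
    by rewrite Rpow_mult_distr; Lra.lra.
  have NqT_ge0 : 0 <= N ^ T * q ^ T by apply: Rmult_le_pos.
  by Lra.nra.
have shift : x * x * Rpower x (- (a + 2)) = Rpower x (- a).
  rewrite (_ : x * x = x ^ 2); last by rewrite /= Rmult_1_r.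
  rewrite -Rpower_pow; last by Lra.lra.
  by rewrite -Rpower_plus; f_equal; simpl INR; Lra.lra.
have xxNT_ge0 : 0 <= x * x * N ^ T by apply: Rmult_le_pos; Lra.nra.
have := Rmult_le_compat_l _ _ _ xxNT_ge0 qT_le.
by rewrite -shift; Lra.lra.
Qed.

Lemma INR_muln m k : INR (m * k)%N = INR m * INR k.
Proof. by rewrite mulnE mult_INR. Qed.

Lemma INR_subn m k : (k <= m)%N -> INR (m - k)%N = INR m - INR k.
Proof. by move=> km; rewrite subnE minus_INR //; apply/ssrnat.leP. Qed.

Lemma INR_expn m k : INR (m ^ k)%N = INR m ^ k.
Proof. by elim: k => [//|k IH]; rewrite expnS INR_muln IH. Qed.

Lemma whp_stabilisation (a : R) : 0 < a ->
  exists (c : R) (n0 : nat), 0 < c /\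
    forall (n : nat) (l : 'I_n), (2 <= n)%N -> (n0 <= n)%N ->
      forall T : nat, c * INR n * ln (INR n) <= INR T ->
        1 - Rpower (INR n) (- a) <= prob_stab l T.
Proof.
move=> a_pos; exists (2 * (a + 2)), 2%N; split; first by Lra.lra.
move=> n l n2 _ T T_ge.
set N := #|{: upair n}|.
set bad := #|[set s : {ffun 'I_T -> upair n} | (attached (final_config l s) < n)%N]|.
set good := #|[set s : {ffun 'I_T -> upair n} | `[< stab_by l T s >] ]|.
have all_eq : #|{ffun 'I_T -> upair n}| = (N ^ T)%N by rewrite card_ffun card_ord.
have N_pos : (0 < N)%N by apply/card_gt0P; exists (pair01 n2).
have all_pos : 0 < INR (N ^ T)%N by apply/lt_0_INR/ssrnat.ltP; rewrite expn_gt0 N_pos.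
have x_ge2 : 2 <= INR n by exact: (le_INR 2 n (ssrnat.leP n2)).
have bad_real : INR bad * 2 * (2 * INR n) ^ T <=
                INR n * (INR n - 1) * (INR N * (2 * INR n - 1)) ^ T.
  have := le_INR _ _ (ssrnat.leP (bad_schedules_nat l (pair01 n2) T)).
  by rewrite !INR_muln !INR_expn !INR_muln !INR_subn /= ?INR_muln; try lia.
have bad_le := bad_fraction_le x_ge2 a_pos (pos_INR _) (pos_INR _) bad_real T_ge.
have cover : INR (N ^ T)%N <= INR good + INR bad.
  rewrite -all_eq -plus_INR; apply/le_INR/ssrnat.leP; rewrite plusE.
  exact: good_or_bad.
rewrite /prob_stab -/good all_eq -INR_expn in bad_le *.
apply: (Rmult_le_reg_r (INR (N ^ T)%N)) => //.
rewrite /Rdiv Rmult_assoc Rinv_l; last exact: Rgt_not_eq.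
by Lra.nra.
Qed.

End RealBounds.

Theorem theorem1 :
  (* every fair execution stabilises to a graph of T (rooted at the leader) *)
  (forall (n : nat) (l : 'I_n), 2 <= n ->
     forall C : nat -> config n, execution l C -> fair C ->
       exists (G : rel 'I_n) (r : 'I_n), in_T G r /\ stabilises_to l C G r) /\
  (* every graph of T on n nodes is the stabilised output of some execution *)
  (forall (n : nat) (l : 'I_n), 2 <= n ->
     forall (G : rel 'I_n) (r : 'I_n), in_T G r ->
       exists C : nat -> config n, execution l C /\ fair C /\ stabilises_to l C G r) /\
  (* O(log n) parallel time with high probability *)
  (forall a : R, Rlt 0 a ->
     exists (c : R) (n0 : nat), Rlt 0 c /\
       forall (n : nat) (l : 'I_n), 2 <= n -> n0 <= n ->
         forall T : nat, Rle (Rmult (Rmult c (INR n)) (ln (INR n))) (INR T) ->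
           Rle (Rminus 1 (Rpower (INR n) (Ropp a))) (prob_stab l T)).
Proof.
split; first by move=> n l n2 C execC; exact: fair_stabilises.
split; first by move=> n l n2; exact: language_realised.
exact: whp_stabilisation.
Qed.
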